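(* Let $a=\{a_1,\ldots,a_n\}$ be a list of positive integers. For $\epsilon\in\mathbb{R}$ define the quartic form in $x\in\mathbb{R}^n$ $$q^h_{a,\epsilon}(x):=\sum_i x_i^4+\Big(\big(\sum_i a_ix_i\big)^2-2\sum_i x_i^2\Big)\Big(\frac1n\sum_i x_i^2\Big)+(n-\epsilon)\Big(\frac1n\sum_i x_i^2\Big)^2,$$ equivalently $q^h_{a,\epsilon}(x)=p_a\!\left(x/(\frac1n\sum_i x_i^2)^{1/2}\right)(\frac1n\sum_i x_i^2)^2-\epsilon(\frac1n\sum_i x_i^2)^2$ where $p_a(x)=\sum_i(x_i^2-1)^2+(\sum_i a_ix_i)^2$. Then the partition instance $a$ is infeasible if and only if there exists $\epsilon>0$ for which $q^h_{a,\epsilon}(x)\ge 0$ for all $x\in\mathbb{R}^n$.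
   Context: A partition instance $a_1,\ldots,a_n$ (positive integers) is feasible if the index set $\{1,\ldots,n\}$ can be split into two sets $S_1,S_2$ with $\sum_{i\in S_1}a_i=\sum_{i\in S_2}a_i$, and infeasible otherwise. *)

From mathcomp Require Import all_boot all_order all_algebra.
From mathcomp Require Import reals.
Set Implicit Arguments. Unset Strict Implicit. Unset Printing Implicit Defensive.
Import Order.TTheory GRing.Theory Num.Theory.
Local Open Scope ring_scope.

Definition partition_feasible (n : nat) (a : 'I_n -> nat) : Prop :=
  exists S : {set 'I_n}, (\sum_(i in S) a i = \sum_(i in ~: S) a i)%N.

Definition qh (R : realType) (n : nat) (a : 'I_n -> nat) (eps : R) (x : 'I_n -> R) : R :=
  let m := (n%:R)^-1 * \sum_i x i ^+ 2 in
  \sum_i x i ^+ 4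
  + ((\sum_i (a i)%:R * x i) ^+ 2 - 2 * \sum_i x i ^+ 2) * m
  + (n%:R - eps) * m ^+ 2.

(* Write m for the mean of the x_i^2 and L for sum_i a_i x_i. Then
   q^h_{a,eps}(x) = sum_i (x_i^2 - m)^2 + L^2 m - eps m^2.  At the sign vector of
   a balanced partition this equals -eps.  Conversely, if a is infeasible then
   |sum_i a_i s_i| >= 1 for every sign vector s, and for eps = t^2 with t small:
   either some x_i^2 is t m away from m, so the first sum alone beats eps m^2, or
   all |x_i| are close to sqrt m, so L is close to sqrt m times a signed sum of the
   a_i and hence L^2 >= m/4 >= eps m. *)
From mathcomp Require Import all_boot all_order all_algebra.
From mathcomp Require Import reals.
From mathcomp Require Import lra ring.
Import Order.TTheory GRing.Theory Num.Theory.
Local Open Scope ring_scope.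

Lemma ler1_norm_natrB (R : realDomainType) (u v : nat) :
  u <> v -> 1 <= `|u%:R - v%:R : R|.
Proof.
move=> neq_uv; case: (ltngtP u v) => [lt_uv|lt_vu|//].
- have : u.+1%:R <= v%:R :> R by rewrite ler_nat.
  by rewrite -addn1 natrD distrC => ?; rewrite ger0_norm; lra.
- have : v.+1%:R <= u%:R :> R by rewrite ler_nat.
  by rewrite -addn1 natrD => ?; rewrite ger0_norm; lra.
Qed.

Lemma dist_sqrtr_le (R : rcfType) (y m t : R) :
  0 <= y -> 0 <= m -> `|y ^+ 2 - m| <= t * m ->
  `|y - Num.sqrt m| <= t * Num.sqrt m.
Proof.
move=> y_ge0 m_ge0; set r := Num.sqrt m.
have r_ge0 : 0 <= r by exact: sqrtr_ge0.
have <- : r ^+ 2 = m by exact: sqr_sqrtr.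
rewrite subr_sqr normrM (ger0_norm (addr_ge0 y_ge0 r_ge0)) => le_dist.
have dist_ge0 := normr_ge0 (y - r).
have [r_gt0 | r0] := ltrP 0 r.
  have := mulr_ge0 dist_ge0 y_ge0; rewrite -(ler_pM2r r_gt0); nra.
have r_eq0 : r = 0 by apply/eqP; rewrite eq_le r0 r_ge0.
move: le_dist; rewrite r_eq0 !subr0 addr0 ger0_norm // !mulr0 expr0n /= mulr0; nra.
Qed.

Lemma sum_sqr_subrE (R : comPzRingType) n (x : 'I_n -> R) (m : R) :
  \sum_i (x i ^+ 2 - m) ^+ 2 =
  \sum_i x i ^+ 4 - 2 * m * \sum_i x i ^+ 2 + n%:R * m ^+ 2.
Proof.
rewrite (eq_bigr (fun i => x i ^+ 4 - (2 * m) * x i ^+ 2 + m ^+ 2)) => [|i _].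
  by rewrite big_split /= sumrB -mulr_sumr sumr_const card_ord [n%:R * _]mulr_natl.
by ring.
Qed.

Section Quartic.
Variables (R : realType) (n : nat) (a : 'I_n -> nat).

Definition sgn_set (S : {set 'I_n}) (i : 'I_n) : R := if i \in S then 1 else -1.

Lemma sum_sgn_set (S : {set 'I_n}) :
  \sum_i (a i)%:R * sgn_set S i =
  (\sum_(i in S) a i)%N%:R - (\sum_(i in ~: S) a i)%N%:R.
Proof.
rewrite (bigID (mem S)) /= !natr_sum -sumrN; congr (_ + _).
  by apply: eq_bigr => i iS; rewrite /sgn_set iS mulr1.
apply: eq_big => [i|i iNS]; first by rewrite in_setC.
by rewrite /sgn_set (negbTE iNS) mulrN1.
Qed.

Lemma infeasible_sum_sgn_set (S : {set 'I_n}) :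
  ~ partition_feasible a -> 1 <= `|\sum_i (a i)%:R * sgn_set S i|.
Proof.
by move=> infeas; rewrite sum_sgn_set; apply: ler1_norm_natrB => eqS; apply: infeas; exists S.
Qed.

Lemma qhE (eps : R) (x : 'I_n -> R) : (0 < n)%N ->
  let m := n%:R^-1 * \sum_i x i ^+ 2 in
  qh a eps x =
  \sum_i (x i ^+ 2 - m) ^+ 2 + (\sum_i (a i)%:R * x i) ^+ 2 * m - eps * m ^+ 2.
Proof.
move=> n_gt0 m; have n_neq0 : n%:R != 0 :> R by rewrite pnatr_eq0 -lt0n.
have nm : n%:R * m = \sum_i x i ^+ 2 by rewrite /m mulrA mulfV ?mul1r.
by rewrite /qh -/m sum_sqr_subrE -nm; ring.
Qed.

Lemma qh_sgn_set (eps : R) (S : {set 'I_n}) : (0 < n)%N ->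
  qh a eps (sgn_set S) = (\sum_i (a i)%:R * sgn_set S i) ^+ 2 - eps.
Proof.
move=> n_gt0; rewrite qhE //=.
have sgn_sqr i : sgn_set S i ^+ 2 = 1.
  by rewrite /sgn_set; case: ifP; rewrite ?sqrrN expr1n.
have -> : \sum_i sgn_set S i ^+ 2 = n%:R.
  by rewrite (eq_bigr (fun=> 1)) // sumr_const card_ord.
rewrite mulVf ?pnatr_eq0 -?lt0n // big1 => [|i _]; last by rewrite sgn_sqr subrr expr0n.
by rewrite expr1n !mulr1 add0r.
Qed.

Lemma infeasible_dot_ge_half (x : 'I_n -> R) (t r : R) :
  ~ partition_feasible a -> 0 <= r -> (\sum_i (a i)%:R) * t <= 1 / 2 ->
  (forall i, `| `|x i| - r| <= t * r) ->
  r / 2 <= `|\sum_i (a i)%:R * x i|.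
Proof.
move=> infeas r_ge0 small_t near_r.
set S := [set i | 0 <= x i]; set L := \sum_i _ * x i.
set N := \sum_i (a i)%:R * sgn_set S i.
have x_sgn i : x i = sgn_set S i * `|x i|.
  rewrite /sgn_set inE; case: ifP => [/ger0_norm ->|/negbT]; first by rewrite mul1r.
  by rewrite -ltNge => /ltr0_norm ->; rewrite mulN1r opprK.
have dist_L : `|L - r * N| <= (\sum_i (a i)%:R) * t * r.
  have -> : L - r * N = \sum_i (a i)%:R * sgn_set S i * (`|x i| - r).
    rewrite /L /N mulr_sumr -sumrB; apply: eq_bigr => i _; rewrite {1}x_sgn; ring.
  rewrite !mulr_suml; apply: (le_trans (ler_norm_sum _ _ _)); apply: ler_sum => i _.
  have sgn_norm : `|sgn_set S i| = 1 by rewrite /sgn_set; case: ifP; rewrite ?normrN normr1.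
  by rewrite !normrM sgn_norm mulr1 normr_nat -mulrA ler_wpM2l.
have r_le_rN : r <= `|r * N|.
  by rewrite normrM (ger0_norm r_ge0) ler_peMr // infeasible_sum_sgn_set.
have := ler_normB L (L - r * N); rewrite opprB addrC subrK.
have := ler_wpM2r r_ge0 small_t; lra.
Qed.

Lemma infeasible_qh_ge0 (t : R) (x : 'I_n -> R) :
  (0 < n)%N -> ~ partition_feasible a ->
  0 <= t -> t <= 1 / 2 -> (\sum_i (a i)%:R) * t <= 1 / 2 ->
  0 <= qh a (t ^+ 2) x.
Proof.
move=> n_gt0 infeas t_ge0 t_le_half small_t; rewrite qhE //=.
set m := _ * _; set L := \sum_i _ * x i; set D := \sum_i _.
have m_ge0 : 0 <= m by rewrite mulr_ge0 ?invr_ge0 ?sumr_ge0 // => i _; exact: sqr_ge0.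
have D_ge0 : 0 <= D by rewrite sumr_ge0 // => i _; exact: sqr_ge0.
have L2m_ge0 : 0 <= L ^+ 2 * m by rewrite mulr_ge0 ?sqr_ge0.
have [/existsP [i far_i] | /existsPn near] := boolP [exists i, t * m <= `|x i ^+ 2 - m|].
  have : (x i ^+ 2 - m) ^+ 2 <= D.
    by rewrite /D (bigD1 i) //= lerDl sumr_ge0 // => j _; exact: sqr_ge0.
  rewrite -real_normK ?num_real //; have := mulr_ge0 t_ge0 m_ge0; nra.
have near_sqrt i : `| `|x i| - Num.sqrt m| <= t * Num.sqrt m.
  apply: dist_sqrtr_le => //; rewrite real_normK ?num_real //.
  by rewrite ltW // ltNge near.
have := infeasible_dot_ge_half x t _ infeas (sqrtr_ge0 m) small_t near_sqrt.
rewrite -/L => L_ge; have : m / 4 <= L ^+ 2.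
  rewrite -[L ^+ 2]real_normK ?num_real // -(sqr_sqrtr m_ge0).
  by have := sqrtr_ge0 m; nra.
move=> /(ler_wpM2r m_ge0) L2m_ge.
have /(ler_wpM2r (sqr_ge0 m)) : t ^+ 2 <= 1 / 4 by nra.
lra.
Qed.

End Quartic.

Theorem theorem5p3 (R : realType) (n : nat) (a : 'I_n -> nat)
    (hn : (0 < n)%N) (ha : forall i, (0 < a i)%N) :
  ~ partition_feasible a <->
  exists eps : R, 0 < eps /\ forall x : 'I_n -> R, 0 <= qh a eps x.
Proof.
split=> [infeas | [eps [eps_gt0 qh_ge0]] [S balanced]].
  set A := \sum_i (a i)%:R : R.
  have A_ge0 : 0 <= A by rewrite sumr_ge0.
  set t := (2 * (A + 1))^-1.
  have t_gt0 : 0 < t by rewrite invr_gt0; lra.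
  have t_inv : t * (2 * (A + 1)) = 1 by rewrite mulVf //; lra.
  have At_ge0 := mulr_ge0 A_ge0 (ltW t_gt0).
  exists (t ^+ 2); split => [|x]; first by rewrite exprn_gt0.
  by apply: infeasible_qh_ge0 => //; rewrite -/A; lra.
have := qh_ge0 (@sgn_set R n S); rewrite qh_sgn_set // sum_sgn_set balanced subrr.
by rewrite expr0n /=; lra.
Qed.
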